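(* Let $\mathcal{I},\mathcal{J}$ be ideals on $\omega$ with $\mathcal{J}\le_{\mathrm{KB}}\mathcal{I}$. If Player II has a winning strategy in the tallness game with respect to $\mathcal{J}$, then Player II has a winning strategy in the tallness game with respect to $\mathcal{I}$.
   Context: Ideals on $\omega$ are assumed to contain all finite sets. For ideals $\mathcal{J}$ on $X$ and $\mathcal{I}$ on $Y$, $\mathcal{J}\le_{\mathrm{KB}}\mathcal{I}$ means there is a finite-to-one function $f:Y\to X$ with $f^{-1}(J)\in\mathcal{I}$ for every $J\in\mathcal{J}$. For an ideal $\mathcal{I}$ on $\omega$, the tallness game with respect to $\mathcal{I}$: at round $k$, Player I plays $n_k\in\omega$ with $n_0<n_1<\cdots$ and then Player II plays $i_k\in\{0,1\}$. Player II wins iff $\{n_k: i_k=1\}$ is infinite and belongs to $\mathcal{I}$. *)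

From Stdlib Require Import List Arith.
Import ListNotations.

Definition finite_set (A : nat -> Prop) : Prop :=
  exists N, forall x, A x -> x < N.

Definition set_incl (A B : nat -> Prop) : Prop := forall x, A x -> B x.

Record is_ideal (I : (nat -> Prop) -> Prop) : Prop := {
  ideal_down : forall A B, set_incl A B -> I B -> I A;
  ideal_union : forall A B, I A -> I B -> I (fun x => A x \/ B x);
  ideal_fin : forall A, finite_set A -> I A;
  ideal_proper : ~ I (fun _ => True)
}.

Definition finite_to_one (f : nat -> nat) : Prop :=
  forall x, finite_set (fun y => f y = x).

Definition KB_le (J I : (nat -> Prop) -> Prop) : Prop :=
  exists f : nat -> nat, finite_to_one f /\
    forall A, J A -> I (fun y => A (f y)).

(* A play of Player I is a strictly increasing sequence
   n : nat -> nat.  A strategy of Player II maps the finite sequence of moves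
   of Player I so far [n_0; ...; n_k] to the answer i_k (true = 1). *)
Definition strictly_increasing (n : nat -> nat) : Prop :=
  forall k, n k < n (S k).

Definition prefix (n : nat -> nat) (k : nat) : list nat :=
  map n (seq 0 (S k)).

Definition selected (sigma : list nat -> bool) (n : nat -> nat) : nat -> Prop :=
  fun m => exists k, n k = m /\ sigma (prefix n k) = true.

Definition II_wins_play (I : (nat -> Prop) -> Prop) (sigma : list nat -> bool)
  (n : nat -> nat) : Prop :=
  ~ finite_set (selected sigma n) /\ I (selected sigma n).

Definition II_winning_strategy (I : (nat -> Prop) -> Prop)
  (sigma : list nat -> bool) : Prop :=
  forall n, strictly_increasing n -> II_wins_play I sigma n.

Definition II_has_winning_strategy (I : (nat -> Prop) -> Prop) : Prop :=
  exists sigma, II_winning_strategy I sigma.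

(* Let f witness J <=_KB I and let sigma be a winning strategy of Player II
   for J.  Facing a play n_0 < n_1 < ... of the I-game, Player II watches the
   values f(n_0), f(n_1), ... and keeps the list of their strict records
   (values larger than every earlier value).  These records form a strictly
   increasing play of the J-game; Player II answers 1 at round k exactly when
   f(n_k) is a new record and sigma answers 1 to the record list so far.

   Finally, with g = f o n, the set selected by the transferred strategy is
   contained in f^{-1} of the set selected by sigma against the record
   sequence (hence lies in I), and its image under f covers that set (hence
   it is infinite). *)

From Stdlib Require Import List Arith Lia ConstructiveEpsilon.
Import ListNotations.

Lemma finite_incl (A B : nat -> Prop) :
  set_incl A B -> finite_set B -> finite_set A.
Proof. intros HAB [N HN]. exists N. intros x Hx. apply HN, HAB, Hx. Qed.

Definition image (f : nat -> nat) (A : nat -> Prop) : nat -> Prop :=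
  fun z => exists y, A y /\ f y = z.

Lemma finite_image (f : nat -> nat) (A : nat -> Prop) :
  finite_set A -> finite_set (image f A).
Proof.
  intros [N HN].
  assert (Hbound : exists M, forall y, y < N -> f y < M).
  { clear HN. induction N as [|N [M HM]].
    - exists 0. lia.
    - exists (M + S (f N)). intros y Hy.
      destruct (Nat.eq_dec y N) as [->|Hne]; [lia|].
      specialize (HM y ltac:(lia)). lia. }
  destruct Hbound as [M HM]. exists M.
  intros z [y [Hy <-]]. apply HM, HN, Hy.
Qed.

Lemma finite_to_one_preimage_below (f : nat -> nat) :
  finite_to_one f -> forall a, finite_set (fun y => f y <= a).
Proof.
  intros Hf a. induction a as [|a [N1 H1]].
  - destruct (Hf 0) as [N HN]. exists N. intros y Hy. apply HN. lia.
  - destruct (Hf (S a)) as [N2 H2]. exists (N1 + N2). intros y Hy.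
    destruct (Nat.eq_dec (f y) (S a)) as [E|E].
    + specialize (H2 y E). lia.
    + specialize (H1 y ltac:(lia)). lia.
Qed.

Lemma strictly_increasing_ge (n : nat -> nat) :
  strictly_increasing n -> forall k, k <= n k.
Proof. intros Hn k. induction k; [lia|]. specialize (Hn k). lia. Qed.

Lemma finite_to_one_tends (f n : nat -> nat) :
  finite_to_one f -> strictly_increasing n ->
  forall a, exists N, forall k, N <= k -> a < f (n k).
Proof.
  intros Hf Hn a.
  destruct (finite_to_one_preimage_below f Hf a) as [N HN]. exists N.
  intros k Hk. destruct (Nat.lt_ge_cases a (f (n k))) as [Hlt|Hge]; [exact Hlt|].
  specialize (HN _ Hge). pose proof (strictly_increasing_ge n Hn k). lia.
Qed.

(* Scanning a list of values while recording its strict records: the state is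
   the list of records so far and whether the last value was a new record. *)
Definition record_candidate (L : list nat) (y : nat) : bool :=
  match L with
  | [] => true
  | _ :: _ => last L 0 <? y
  end.

Definition record_step (s : list nat * bool) (y : nat) : list nat * bool :=
  if record_candidate (fst s) y then (fst s ++ [y], true) else (fst s, false).

Definition record_scan (ys : list nat) : list nat * bool :=
  fold_left record_step ys ([], false).

Definition transferred_strategy (f : nat -> nat) (sigma : list nat -> bool)
  (l : list nat) : bool :=
  let s := record_scan (map f l) in snd s && sigma (fst s).

Lemma last_nth (l : list nat) : l <> [] -> nth (pred (length l)) l 0 = last l 0.
Proof.
  induction l as [|a [|b l] IH]; intros Hl; [congruence|reflexivity|].
  apply IH. discriminate.
Qed.

Section Records.

Variable g : nat -> nat.

Definition records (k : nat) : list nat := fst (record_scan (prefix g k)).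
Definition is_record (k : nat) : bool := snd (record_scan (prefix g k)).

Lemma record_scan_S k :
  record_scan (prefix g (S k)) = record_step (record_scan (prefix g k)) (g (S k)).
Proof.
  unfold record_scan, prefix.
  rewrite (seq_S (S k) 0), map_app, fold_left_app. reflexivity.
Qed.

Lemma records_S_cases k :
  (is_record (S k) = true /\ records (S k) = records k ++ [g (S k)] /\
     record_candidate (records k) (g (S k)) = true) \/
  (is_record (S k) = false /\ records (S k) = records k /\
     record_candidate (records k) (g (S k)) = false).
Proof.
  unfold records, is_record. rewrite record_scan_S.
  unfold record_step. destruct record_candidate; auto.
Qed.

(* From round 0 on, g 0 is a record, so the record list is never empty. *)
Lemma records_nonempty k : records k <> [].
Proof.
  induction k as [|k IH]; [discriminate|].
  destruct (records_S_cases k) as [[_ [-> _]]|[_ [-> _]]]; [|exact IH].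
  destruct (records k); discriminate.
Qed.

Lemma records_S k :
  (is_record (S k) = true /\ records (S k) = records k ++ [g (S k)] /\
     last (records k) 0 < g (S k)) \/
  (is_record (S k) = false /\ records (S k) = records k /\
     g (S k) <= last (records k) 0).
Proof.
  assert (Hc : record_candidate (records k) (g (S k)) = (last (records k) 0 <? g (S k))).
  { pose proof (records_nonempty k). destruct (records k); [congruence|reflexivity]. }
  destruct (records_S_cases k) as [[H1 [H2 H3]]|[H1 [H2 H3]]]; rewrite Hc in H3;
    [left|right]; repeat split; auto;
    [apply Nat.ltb_lt | apply Nat.ltb_ge]; exact H3.
Qed.

Lemma records_last_record k : is_record k = true -> last (records k) 0 = g k.
Proof.
  destruct k as [|k]; [reflexivity|].
  destruct (records_S k) as [[_ [-> _]]|[H _]]; [intros _; apply last_last|congruence].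
Qed.

Lemma records_bound k : g k <= last (records k) 0.
Proof.
  destruct k as [|k]; [reflexivity|].
  destruct (records_S k) as [[_ [-> _]]|[_ [-> H]]]; [|exact H].
  rewrite last_last. reflexivity.
Qed.

Lemma records_extend k k' : k <= k' -> exists t, records k' = records k ++ t.
Proof.
  intros Hle. induction Hle as [|k' _ [t Ht]]; [exists []; symmetry; apply app_nil_r|].
  destruct (records_S k') as [[_ [-> _]]|[_ [-> _]]].
  - exists (t ++ [g (S k')]). rewrite Ht, app_assoc. reflexivity.
  - exists t. exact Ht.
Qed.

Lemma records_increasing k i :
  S i < length (records k) -> nth i (records k) 0 < nth (S i) (records k) 0.
Proof.
  induction k as [|k IH]; [simpl; lia|].
  destruct (records_S k) as [[_ [-> Hlt]]|[_ [-> _]]]; [|exact IH].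
  rewrite length_app. simpl length. intros Hi.
  destruct (Nat.lt_ge_cases (S i) (length (records k))).
  - rewrite !app_nth1 by lia. apply IH. lia.
  - rewrite app_nth1, app_nth2 by lia.
    replace (S i - length (records k)) with 0 by lia.
    replace i with (pred (length (records k))) by lia.
    rewrite last_nth by apply records_nonempty. exact Hlt.
Qed.

Lemma records_nth_stable k k' i :
  i < length (records k) -> i < length (records k') ->
  nth i (records k) 0 = nth i (records k') 0.
Proof.
  intros Hk Hk'. destruct (Nat.le_ge_cases k k') as [Hle|Hle];
    destruct (records_extend _ _ Hle) as [t Ht].
  - rewrite Ht, app_nth1; auto.
  - rewrite Ht, app_nth1; auto.
Qed.

Lemma record_round k j :
  j < length (records k) -> exists k0, is_record k0 = true /\ length (records k0) = S j.
Proof.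
  revert j. induction k as [|k IH]; intros j Hj.
  - exists 0. simpl in *. split; [reflexivity|lia].
  - destruct (records_S k) as [[Hr [E _]]|[_ [E _]]]; rewrite E in Hj; [|auto].
    rewrite length_app in Hj. simpl length in Hj.
    destruct (Nat.lt_ge_cases j (length (records k))); [auto|].
    exists (S k). rewrite E, length_app. simpl length. split; [exact Hr|lia].
Qed.

Hypothesis g_tends : forall a, exists N, forall k, N <= k -> a < g k.

Lemma records_grow k : exists k', length (records k) < length (records k').
Proof.
  destruct (g_tends (last (records k) 0)) as [N HN].
  exists (N + k). destruct (records_extend k (N + k) ltac:(lia)) as [[|y t] Ht].
  - exfalso. pose proof (records_bound (N + k)).
    specialize (HN (N + k) ltac:(lia)). rewrite Ht, app_nil_r in *. lia.
  - rewrite Ht, length_app. simpl length. lia.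
Qed.

Lemma records_unbounded j : exists k, j < length (records k).
Proof.
  induction j as [|j [k Hk]]; [exists 0; simpl; lia|].
  destruct (records_grow k) as [k' Hk']. exists k'. lia.
Qed.

Definition record_time (j : nat) : nat :=
  proj1_sig (constructive_indefinite_ground_description_nat _
    (fun K => lt_dec j (length (records K))) (records_unbounded j)).

Lemma record_time_spec j : j < length (records (record_time j)).
Proof.
  unfold record_time.
  destruct constructive_indefinite_ground_description_nat as [K HK]. exact HK.
Qed.

(* The record sequence: the common extension of all record lists. *)
Definition record_seq (j : nat) : nat := nth j (records (record_time j)) 0.

Lemma record_seq_nth k i :
  i < length (records k) -> record_seq i = nth i (records k) 0.
Proof. intros Hi. apply records_nth_stable; [apply record_time_spec|exact Hi]. Qed.

Lemma record_seq_increasing : strictly_increasing record_seq.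
Proof.
  intros i. pose proof (record_time_spec (S i)) as Hi.
  rewrite !(record_seq_nth (record_time (S i))) by lia.
  apply records_increasing, Hi.
Qed.

Lemma record_seq_prefix k : prefix record_seq (pred (length (records k))) = records k.
Proof.
  assert (Hlen : S (pred (length (records k))) = length (records k)).
  { pose proof (records_nonempty k). destruct (records k); [congruence|reflexivity]. }
  unfold prefix. rewrite Hlen. apply nth_ext with (d := 0) (d' := 0).
  - rewrite length_map, length_seq. reflexivity.
  - intros i Hi. rewrite length_map, length_seq in Hi.
    rewrite nth_indep with (d' := record_seq 0) by (rewrite length_map, length_seq; lia).
    rewrite map_nth, seq_nth by exact Hi. apply record_seq_nth, Hi.
Qed.

Lemma record_seq_last k : record_seq (pred (length (records k))) = last (records k) 0.
Proof.
  pose proof (records_nonempty k) as Hne.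
  rewrite (record_seq_nth k) by (destruct (records k); [congruence|simpl; lia]).
  apply last_nth, Hne.
Qed.

End Records.

Section Transfer.

Variables (f : nat -> nat) (sigma : list nat -> bool) (n : nat -> nat).
Hypothesis f_fin : finite_to_one f.
Hypothesis n_incr : strictly_increasing n.

Let g : nat -> nat := fun k => f (n k).
Let g_tends : forall a, exists N, forall k, N <= k -> a < g k :=
  finite_to_one_tends f n f_fin n_incr.
Let m : nat -> nat := record_seq g g_tends.

Lemma transferred_answer k :
  transferred_strategy f sigma (prefix n k) = andb (is_record g k) (sigma (records g k)).
Proof. unfold transferred_strategy, is_record, records, prefix. rewrite map_map. reflexivity. Qed.

Lemma transferred_selected_incl :
  set_incl (selected (transferred_strategy f sigma) n) (fun y => selected sigma m (f y)).
Proof.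
  intros y [k [<- Hk]]. rewrite transferred_answer in Hk.
  apply andb_prop in Hk. destruct Hk as [Hrec Hsig].
  exists (pred (length (records g k))). split.
  - unfold m. rewrite record_seq_last. exact (records_last_record g k Hrec).
  - unfold m. rewrite record_seq_prefix. exact Hsig.
Qed.

Lemma transferred_selected_image :
  set_incl (selected sigma m) (image f (selected (transferred_strategy f sigma) n)).
Proof.
  intros z [j [<- Hj]].
  pose proof (record_time_spec g g_tends j) as Hj'.
  destruct (record_round g _ j Hj') as [k [Hrec Hlen]].
  assert (Hpred : pred (length (records g k)) = j) by (rewrite Hlen; reflexivity).
  exists (n k). split.
  - exists k. split; [reflexivity|]. rewrite transferred_answer, Hrec. simpl.
    rewrite <- (record_seq_prefix g g_tends k), Hpred.
    exact Hj.
  - rewrite <- Hpred. unfold m. rewrite record_seq_last.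
    symmetry. exact (records_last_record g k Hrec).
Qed.

Lemma transferred_wins_play (I J : (nat -> Prop) -> Prop) :
  is_ideal I -> (forall A, J A -> I (fun y => A (f y))) ->
  II_winning_strategy J sigma -> II_wins_play I (transferred_strategy f sigma) n.
Proof.
  intros HI HfJ Hsig.
  destruct (Hsig m (record_seq_increasing _ _)) as [Hinf HJ]. split.
  - intros Hfin. apply Hinf.
    apply (finite_incl _ _ transferred_selected_image), finite_image, Hfin.
  - apply (ideal_down _ HI _ _ transferred_selected_incl), HfJ, HJ.
Qed.

End Transfer.

Theorem mainTheorem12 (I J : (nat -> Prop) -> Prop) :
  is_ideal I -> is_ideal J -> KB_le J I ->
  II_has_winning_strategy J -> II_has_winning_strategy I.
Proof.
  intros HI _ [f [Hf HfJ]] [sigma Hsig].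
  exists (transferred_strategy f sigma). intros n Hn.
  exact (transferred_wins_play f sigma n Hf Hn I J HI HfJ Hsig).
Qed.
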